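(* Let $X$ be a normed space, $1\le r<\infty$, $T>0$, and $a:[0,T]\to X$ continuously differentiable. Then $$\hat V^r(a(t))_{t\in[0,T]}\le 8\,\|a\|_{L^r([0,T];X)}^{1-1/r}\,\|a'\|_{L^r([0,T];X)}^{1/r}.$$
   Context: For a family $(a_t)_{t\in I}$ in a normed space, $\hat V^r(a_t)_{t\in I}=\sup_{t_0<t_1<\dots<t_J\in I}(\sum_{j=1}^J\|a_{t_j}-a_{t_{j-1}}\|^r)^{1/r}$, supremum over all $J$ and all increasing finite sequences in $I$. *)

From Stdlib Require Import Reals Lra.
Open Scope R_scope.

Record NormedSpace := {
  carrier :> Type;
  vzero : carrier;
  vadd : carrier -> carrier -> carrier;
  vopp : carrier -> carrier;
  vscal : R -> carrier -> carrier;
  vnorm : carrier -> R;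
  vadd_assoc : forall x y z, vadd x (vadd y z) = vadd (vadd x y) z;
  vadd_comm : forall x y, vadd x y = vadd y x;
  vadd_0 : forall x, vadd x vzero = x;
  vadd_opp : forall x, vadd x (vopp x) = vzero;
  vscal_1 : forall x, vscal 1 x = x;
  vscal_assoc : forall a b x, vscal a (vscal b x) = vscal (a * b) x;
  vscal_distr_v : forall a x y, vscal a (vadd x y) = vadd (vscal a x) (vscal a y);
  vscal_distr_s : forall a b x, vscal (a + b) x = vadd (vscal a x) (vscal b x);
  vnorm_eq0 : forall x, vnorm x = 0 -> x = vzero;
  vnorm_scal : forall a x, vnorm (vscal a x) = Rabs a * vnorm x;
  vnorm_triangle : forall x y, vnorm (vadd x y) <= vnorm x + vnorm y
}.

Arguments vzero {_}. Arguments vadd {_}. Arguments vopp {_}.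
Arguments vscal {_}. Arguments vnorm {_}.

Definition vsub {X : NormedSpace} (x y : X) : X := vadd x (vopp y).

(** Real power x^y for x >= 0, with 0^y = 0 for y <> 0 and 0^0 = 1
    (Stdlib's Rpower gives Rpower 0 y = 1, which is not wanted). *)
Definition rpow (x y : R) : R :=
  if Rlt_dec 0 x then Rpower x y else if Req_EM_T y 0 then 1 else 0.

Definition has_derivative_on {X : NormedSpace} (a a' : R -> X) (T : R) : Prop :=
  forall t, 0 <= t <= T -> forall eps, 0 < eps -> exists delta, 0 < delta /\
    forall s, 0 <= s <= T -> s <> t -> Rabs (s - t) < delta ->
      vnorm (vsub (vscal (/ (s - t)) (vsub (a s) (a t))) (a' t)) < eps.

Definition continuous_on {X : NormedSpace} (f : R -> X) (T : R) : Prop :=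
  forall t, 0 <= t <= T -> forall eps, 0 < eps -> exists delta, 0 < delta /\
    forall s, 0 <= s <= T -> Rabs (s - t) < delta -> vnorm (vsub (f s) (f t)) < eps.

Fixpoint fsum (f : nat -> R) (J : nat) : R :=
  match J with O => 0 | S k => fsum f k + f k end.

Definition rvar_sum {X : NormedSpace} (a : R -> X) (r : R) (t : nat -> R) (J : nat) : R :=
  rpow (fsum (fun j => rpow (vnorm (vsub (a (t (S j))) (a (t j)))) r) J) (/ r).

(** \hat V^r (a(t))_{t in [0,T]} <= C, i.e. the supremum over all finite
    increasing sequences t_0 < ... < t_J in [0,T] is at most C. *)
Definition Vhat_le {X : NormedSpace} (a : R -> X) (r T C : R) : Prop :=
  forall (J : nat) (t : nat -> R),
    0 <= t O -> t J <= T -> (forall j, (j < J)%nat -> t j < t (S j)) ->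
    rvar_sum a r t J <= C.

From Coquelicot Require Import Coquelicot.
From Stdlib Require Import Reals Lra Lia Classical_Prop.
Open Scope R_scope.

(* Fix mu > 0 and put h_mu = (1 - 1/r) mu |a|^r + (1/r) mu^(1-r) |a'|^r.  By Young's
   inequality c^(r-1) |a'| <= h_mu wherever |a| >= c, so the mean value inequality gives
   c^(r-1) |a(v) - a(u)| <= int_u^v h_mu on every interval where |a| stays >= c.  An
   increment a(s1) - a(s0) of norm D always contains such an interval with c = D/4 and
   |a(v) - a(u)| >= c: either |a| >= c on all of [s0, s1], or the path dips below c and has
   to climb from the sphere of radius c to an endpoint of norm >= 2c.  Hence
   D^r <= 4^r int_s0^s1 h_mu; summing over a partition and minimising over mu
   (mu = (int |a'|^r / int |a|^r)^(1/r)) yields the bound with the constant 4 <= 8. *)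

Section NormedSpaceFacts.

Variable X : NormedSpace.
Implicit Types x y z : X.

Lemma vscal0 x : vscal 0 x = vzero.
Proof.
  transitivity (vadd (vscal 0 x) (vadd (vscal 0 x) (vopp (vscal 0 x)))).
  - rewrite vadd_opp, vadd_0. auto.
  - rewrite vadd_assoc, <- vscal_distr_s, Rplus_0_l, vadd_opp. auto.
Qed.

Lemma vopp_scal x : vopp x = vscal (-1) x.
Proof.
  assert (H : vadd x (vscal (-1) x) = vzero).
  { rewrite <- (vscal_1 _ x) at 1. rewrite <- vscal_distr_s.
    replace (1 + -1) with 0 by ring. apply vscal0. }
  transitivity (vadd (vopp x) (vadd x (vscal (-1) x))).
  - rewrite H, vadd_0. auto.
  - rewrite vadd_assoc, (vadd_comm _ (vopp x)), vadd_opp, vadd_comm, vadd_0. auto.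
Qed.

Lemma vnormN x : vnorm (vopp x) = vnorm x.
Proof.
  rewrite vopp_scal, vnorm_scal. replace (Rabs (-1)) with 1; [ring|].
  unfold Rabs. destruct Rcase_abs; lra.
Qed.

Lemma vnorm0 : vnorm (@vzero X) = 0.
Proof. rewrite <- (vscal0 vzero), vnorm_scal, Rabs_R0. ring. Qed.

Lemma vnorm_ge0 x : 0 <= vnorm x.
Proof.
  pose proof (vnorm_triangle X x (vopp x)) as H.
  rewrite vadd_opp, vnorm0, vnormN in H. lra.
Qed.

Lemma vsubv x : vsub x x = vzero.
Proof. apply vadd_opp. Qed.

Lemma vsubK x y : vadd (vsub x y) y = x.
Proof.
  unfold vsub. rewrite <- vadd_assoc, (vadd_comm _ (vopp y)), vadd_opp, vadd_0. auto.
Qed.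

Lemma vsubr0 x : vsub x vzero = x.
Proof.
  pose proof (vsubK x vzero) as H. rewrite vadd_0 in H. exact H.
Qed.

Lemma vsub_chain x y z : vsub x z = vadd (vsub x y) (vsub y z).
Proof.
  unfold vsub. rewrite <- vadd_assoc. f_equal.
  rewrite vadd_assoc, (vadd_comm _ (vopp y) y), vadd_opp, vadd_comm, vadd_0. auto.
Qed.

Lemma vnorm_sub_triangle x y z : vnorm (vsub x z) <= vnorm (vsub x y) + vnorm (vsub y z).
Proof. rewrite (vsub_chain x y z). apply vnorm_triangle. Qed.

Lemma vnorm_subC x y : vnorm (vsub x y) = vnorm (vsub y x).
Proof.
  unfold vsub. rewrite <- vnormN. f_equal.
  rewrite !vopp_scal, vscal_distr_v, vscal_assoc. replace (-1 * -1) with 1 by ring.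
  rewrite vscal_1, vadd_comm. auto.
Qed.

Lemma vnorm_sub_ge x y : Rabs (vnorm x - vnorm y) <= vnorm (vsub x y).
Proof.
  pose proof (vnorm_sub_triangle x y vzero). pose proof (vnorm_sub_triangle y x vzero).
  rewrite !vsubr0 in *. rewrite (vnorm_subC y x) in *. apply Rabs_le; lra.
Qed.

Lemma vnorm_le_of_quotient (l e : R) x y :
  l <> 0 -> vnorm (vsub (vscal (/ l) x) y) < e -> vnorm x <= Rabs l * (vnorm y + e).
Proof.
  intros Hl H.
  replace x with (vscal l (vadd (vsub (vscal (/ l) x) y) y))
    by (rewrite vsubK, vscal_assoc, Rinv_r by exact Hl; apply vscal_1).
  rewrite vnorm_scal. apply Rmult_le_compat_l; [apply Rabs_pos|].
  eapply Rle_trans; [apply vnorm_triangle|lra].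
Qed.

End NormedSpaceFacts.

Lemma rpowE x y : 0 < x -> rpow x y = exp (y * ln x).
Proof. intros H. unfold rpow. destruct Rlt_dec; [reflexivity|lra]. Qed.

Lemma rpow_0l y : y <> 0 -> rpow 0 y = 0.
Proof. intros H. unfold rpow. destruct Rlt_dec; [lra|]. destruct Req_EM_T; [lra|auto]. Qed.

Lemma rpow_0r x : rpow x 0 = 1.
Proof.
  unfold rpow. destruct Rlt_dec.
  - unfold Rpower. rewrite Rmult_0_l, exp_0. auto.
  - destruct Req_EM_T; lra.
Qed.

Lemma rpow_1l y : rpow 1 y = 1.
Proof. rewrite rpowE by lra. rewrite ln_1, Rmult_0_r, exp_0. auto. Qed.

Lemma rpow_1r x : 0 <= x -> rpow x 1 = x.
Proof.
  intros H. destruct (Req_dec x 0) as [->|]; [apply rpow_0l; lra|].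
  rewrite rpowE by lra. rewrite Rmult_1_l, exp_ln; lra.
Qed.

Lemma rpow_ge0 x y : 0 <= rpow x y.
Proof.
  unfold rpow. destruct Rlt_dec.
  - left. apply exp_pos.
  - destruct Req_EM_T; lra.
Qed.

Lemma rpow_gt0 x y : 0 < x -> 0 < rpow x y.
Proof. intros H. rewrite rpowE by auto. apply exp_pos. Qed.

Lemma rpowD x y z : 0 < x -> rpow x (y + z) = rpow x y * rpow x z.
Proof. intros H. rewrite !rpowE by auto. rewrite <- exp_plus. f_equal. ring. Qed.

Lemma rpowM x y z : 0 <= x -> 0 <= y -> rpow (x * y) z = rpow x z * rpow y z.
Proof.
  intros Hx Hy. destruct (Req_dec z 0) as [->|Hz]; [rewrite !rpow_0r; ring|].
  destruct (Req_dec x 0) as [->|Hx0]; [rewrite Rmult_0_l, !rpow_0l by auto; ring|].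
  destruct (Req_dec y 0) as [->|Hy0]; [rewrite Rmult_0_r, !rpow_0l by auto; ring|].
  rewrite !rpowE by (try apply Rmult_lt_0_compat; lra).
  rewrite ln_mult by lra. rewrite <- exp_plus. f_equal. ring.
Qed.

Lemma rpow_rpow x y z : 0 < x -> rpow (rpow x y) z = rpow x (y * z).
Proof.
  intros Hx. rewrite (rpowE x y), rpowE, ln_exp by (auto; apply exp_pos).
  rewrite rpowE by auto. f_equal. ring.
Qed.

(* For x = 0 both sides are 1 if y = 0 or z = 0, and 0 otherwise. *)
Lemma rpow_rpowC x y z : 0 <= x -> rpow (rpow x y) z = rpow (rpow x z) y.
Proof.
  intros Hx. destruct (Req_dec x 0) as [->|Hx0].
  - destruct (Req_dec y 0) as [->|Hy]; [rewrite !rpow_0r, rpow_1l; auto|].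
    destruct (Req_dec z 0) as [->|Hz]; [rewrite !rpow_0r, rpow_1l; auto|].
    rewrite (rpow_0l y), (rpow_0l z), !rpow_0l by auto. auto.
  - rewrite !rpow_rpow by lra. f_equal. ring.
Qed.

Lemma rpow_le x y z : 0 <= x <= y -> 0 < z -> rpow x z <= rpow y z.
Proof.
  intros Hxy Hz. destruct (Req_dec x 0) as [->|Hx].
  - rewrite rpow_0l by lra. apply rpow_ge0.
  - rewrite !rpowE by lra. destruct (Req_dec x y) as [->|]; [lra|].
    left. apply exp_increasing. apply Rmult_lt_compat_l; auto. apply ln_increasing; lra.
Qed.

Definition young_comb (r mu A B : R) : R :=
  (1 - / r) * mu * A + / r * rpow mu (1 - r) * B.

Lemma exp_convex (l s t : R) : 0 <= l <= 1 ->
  exp (l * s + (1 - l) * t) <= l * exp s + (1 - l) * exp t.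
Proof.
  intros Hl. set (m := l * s + (1 - l) * t).
  assert (Htangent : forall u, exp m * (1 + (u - m)) <= exp u).
  { intros u. replace (exp u) with (exp m * exp (u - m)) by (rewrite <- exp_plus; f_equal; ring).
    apply Rmult_le_compat_l; [left; apply exp_pos|apply exp_ineq1_le]. }
  assert (E : exp m = l * (exp m * (1 + (s - m))) + (1 - l) * (exp m * (1 + (t - m))))
    by (unfold m; ring).
  rewrite E at 1. pose proof (Htangent s). pose proof (Htangent t).
  apply Rplus_le_compat; apply Rmult_le_compat_l; lra.
Qed.

Lemma young_comb_ge0 (r mu A B : R) : 1 <= r -> 0 < mu -> 0 <= A -> 0 <= B ->
  0 <= young_comb r mu A B.
Proof.
  intros Hr Hmu HA HB. unfold young_comb.
  assert (Hr0 : 0 < / r) by (apply Rinv_0_lt_compat; lra).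
  assert (Hr1 : / r <= 1) by (rewrite <- Rinv_1; apply Rinv_le_contravar; lra).
  pose proof (rpow_ge0 mu (1 - r)).
  apply Rplus_le_le_0_compat; repeat apply Rmult_le_pos; lra.
Qed.

(* Weighted AM-GM with weights 1 - 1/r and 1/r applied to mu c^r and mu^(1-r) g^r. *)
Lemma young (r mu c g : R) : 1 <= r -> 0 < mu -> 0 <= c -> 0 <= g ->
  rpow c (r - 1) * g <= young_comb r mu (rpow c r) (rpow g r).
Proof.
  intros Hr Hmu Hc Hg.
  assert (N : 0 <= young_comb r mu (rpow c r) (rpow g r))
    by (apply young_comb_ge0; auto; apply rpow_ge0).
  unfold young_comb in *.
  assert (Hr0 : 0 < / r) by (apply Rinv_0_lt_compat; lra).
  assert (Hr1 : / r <= 1) by (rewrite <- Rinv_1; apply Rinv_le_contravar; lra).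
  destruct (Req_dec r 1) as [->|Hr1'].
  { replace (1 - 1) with 0 by ring. rewrite !rpow_0r, (rpow_1r g), Rinv_1 by auto. lra. }
  destruct (Req_dec c 0) as [->|Hc0]; [rewrite (rpow_0l (r - 1)) by lra; lra|].
  destruct (Req_dec g 0) as [->|Hg0]; [lra|].
  rewrite !rpowE by lra.
  replace g with (exp (ln g)) at 1 by (apply exp_ln; lra).
  rewrite <- exp_plus.
  replace ((1 - / r) * mu * exp (r * ln c)) with ((1 - / r) * exp (ln mu + r * ln c))
    by (rewrite exp_plus, exp_ln by lra; ring).
  replace (/ r * exp ((1 - r) * ln mu) * exp (r * ln g)) with
    (/ r * exp ((1 - r) * ln mu + r * ln g)) by (rewrite exp_plus; ring).
  replace ((r - 1) * ln c + ln g) with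
    ((1 - / r) * (ln mu + r * ln c) + (1 - (1 - / r)) * ((1 - r) * ln mu + r * ln g))
    by (field; lra).
  pose proof (exp_convex (1 - / r) (ln mu + r * ln c) ((1 - r) * ln mu + r * ln g)) as Hconv.
  replace (1 - (1 - / r)) with (/ r) in * by ring. apply Hconv. lra.
Qed.

Lemma young_comb_le_l (r mu A A' B : R) : 1 <= r -> 0 < mu -> A <= A' ->
  young_comb r mu A B <= young_comb r mu A' B.
Proof.
  intros Hr Hmu HA. unfold young_comb. apply Rplus_le_compat_r.
  assert (/ r <= 1) by (rewrite <- Rinv_1; apply Rinv_le_contravar; lra).
  apply Rmult_le_compat_l; [apply Rmult_le_pos|]; lra.
Qed.

Lemma le0_of_forall_le_mul (k S : R) : 0 <= k -> (forall nu, 0 < nu -> S <= k * nu) -> S <= 0.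
Proof.
  intros Hk H. apply Rnot_lt_le. intros HS.
  set (nu := S / (2 * (k + 1))).
  assert (Hnu : 0 < nu) by (apply Rdiv_lt_0_compat; lra).
  assert (E : (k + 1) * nu = S / 2) by (unfold nu; field; lra).
  specialize (H nu Hnu). nra.
Qed.

Lemma le_of_forall_young_comb (r A B S : R) : 1 <= r -> 0 <= A -> 0 <= B ->
  (forall mu, 0 < mu -> S <= young_comb r mu A B) ->
  S <= rpow A (1 - / r) * rpow B (/ r).
Proof.
  intros Hr HA HB H. unfold young_comb in H.
  assert (Hge0 : 0 <= rpow A (1 - / r) * rpow B (/ r)) by (apply Rmult_le_pos; apply rpow_ge0).
  destruct (Req_dec r 1) as [->|Hr1].
  { specialize (H 1 Rlt_0_1). replace (1 - 1) with 0 in H by ring.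
    rewrite Rinv_1, rpow_0r in *. replace (1 - 1) with 0 by ring.
    rewrite rpow_0r, rpow_1r by auto. lra. }
  assert (Hinv : 0 < / r < 1)
    by (split; [apply Rinv_0_lt_compat|rewrite <- Rinv_1; apply Rinv_lt_contravar]; lra).
  destruct (Req_dec A 0) as [->|HA0].
  { (* mu^(1-r) runs through all positive reals *)
    enough (S <= 0) by lra.
    apply (le0_of_forall_le_mul (/ r * B)); [nra|].
    intros nu Hnu. specialize (H (rpow nu (/ (1 - r))) (rpow_gt0 _ _ Hnu)).
    rewrite rpow_rpow, Rinv_l, rpow_1r in H by lra. nra. }
  destruct (Req_dec B 0) as [->|HB0].
  { enough (S <= 0) by lra.
    apply (le0_of_forall_le_mul ((1 - / r) * A)); [nra|].
    intros nu Hnu. specialize (H nu Hnu). nra. }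
  set (m := (ln B - ln A) / r).
  specialize (H (exp m) (exp_pos m)).
  assert (E1 : exp m * A = exp (m + ln A)) by (rewrite exp_plus, exp_ln; lra).
  assert (E2 : rpow (exp m) (1 - r) * B = exp (m + ln A)).
  { rewrite rpowE, ln_exp by apply exp_pos.
    replace (m + ln A) with ((1 - r) * m + ln B) by (unfold m; field; lra).
    rewrite exp_plus, exp_ln; lra. }
  assert (E3 : rpow A (1 - / r) * rpow B (/ r) = exp (m + ln A)).
  { rewrite !rpowE by lra. rewrite <- exp_plus. f_equal. unfold m. field. lra. }
  rewrite (Rmult_assoc (1 - / r)), E1, (Rmult_assoc (/ r)), E2 in H.
  rewrite E3. lra.
Qed.

Lemma rpow_inv_le_of_forall_young_comb (r K A B S : R) :
  1 <= r -> 0 < K -> 0 <= A -> 0 <= B -> 0 <= S ->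
  (forall mu, 0 < mu -> S <= rpow K r * young_comb r mu A B) ->
  rpow S (/ r) <= K * rpow (rpow A (/ r)) (1 - / r) * rpow (rpow B (/ r)) (/ r).
Proof.
  intros Hr HK HA HB HS0 H. pose proof (rpow_gt0 K r HK) as HKr.
  assert (HS : S <= rpow K r * (rpow A (1 - / r) * rpow B (/ r))).
  { replace S with (rpow K r * (S / rpow K r)) at 1 by (field; lra).
    apply Rmult_le_compat_l; [lra|]. apply le_of_forall_young_comb; auto. intros mu Hmu.
    apply (Rmult_le_reg_l (rpow K r)); auto.
    replace (rpow K r * (S / rpow K r)) with S by (field; lra). auto. }
  replace (K * rpow (rpow A (/ r)) (1 - / r) * rpow (rpow B (/ r)) (/ r))
    with (rpow (rpow K r * (rpow A (1 - / r) * rpow B (/ r))) (/ r)).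
  - apply rpow_le; [lra|apply Rinv_0_lt_compat; lra].
  - rewrite !rpowM, rpow_rpow, Rinv_r, rpow_1r, (rpow_rpowC A)
      by (try apply Rmult_le_pos; try apply rpow_ge0; lra).
    ring.
Qed.

Definition continuous_seg (F : R -> R) (p q : R) : Prop :=
  forall t, p <= t <= q -> forall e, 0 < e -> exists d, 0 < d /\
    forall x, p <= x <= q -> Rabs (x - t) < d -> Rabs (F x - F t) < e.

Lemma continuous_seg_narrow F p q p' q' :
  p <= p' -> q' <= q -> continuous_seg F p q -> continuous_seg F p' q'.
Proof.
  intros Hp Hq H t Ht e He. destruct (H t ltac:(lra) e He) as [d [Hd Hd2]].
  exists d. split; auto. intros x Hx. apply Hd2. lra.
Qed.

Lemma continuous_seg_minus F G p q :
  continuous_seg F p q -> continuous_seg G p q -> continuous_seg (fun x => F x - G x) p q.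
Proof.
  intros HF HG t Ht e He.
  destruct (HF t Ht (e / 2) ltac:(lra)) as [d1 [Hd1 H1]].
  destruct (HG t Ht (e / 2) ltac:(lra)) as [d2 [Hd2 H2]].
  exists (Rmin d1 d2). split; [apply Rmin_pos; auto|]. intros x Hx Hxt.
  specialize (H1 x Hx ltac:(eapply Rlt_le_trans; [apply Hxt|apply Rmin_l])).
  specialize (H2 x Hx ltac:(eapply Rlt_le_trans; [apply Hxt|apply Rmin_r])).
  apply Rabs_def2 in H1, H2. apply Rabs_def1; lra.
Qed.

Lemma continuous_seg_of_continuous F p q : (forall x, continuous F x) -> continuous_seg F p q.
Proof.
  intros HF t _ e He.
  pose proof (HF t) as Ht. apply continuity_pt_filterlim in Ht.
  destruct (Ht e He) as [d [Hd H]]. exists d. split; auto.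
  intros x _ Hxt. destruct (Req_dec x t) as [->|Hne].
  - unfold Rminus. rewrite Rplus_opp_r, Rabs_R0. auto.
  - apply H. split; [split; [exact I|congruence]|exact Hxt].
Qed.

Lemma lub_gt (E : R -> Prop) (m x : R) : is_lub E m -> x < m -> exists t, E t /\ x < t.
Proof.
  intros [_ Hleast] Hx. destruct (classic (exists t, E t /\ x < t)) as [H|H]; auto.
  exfalso. enough (m <= x) by lra. apply Hleast. intros t Ht.
  apply Rnot_lt_le. intros Hxt. apply H. eauto.
Qed.

(* The supremum of the points up to which D stays below D p + e must be q. *)
Lemma le_of_right_nonincreasing (D : R -> R) (p q : R) :
  p <= q -> continuous_seg D p q ->
  (forall t, p <= t < q -> exists d, 0 < d /\ forall s, t < s < t + d -> s <= q -> D s <= D t) ->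
  D q <= D p.
Proof.
  intros Hpq Hc Hloc. apply Rle_plus_epsilon. intros e He.
  set (E := fun t => p <= t <= q /\ forall x, p <= x <= t -> D x <= D p + e).
  assert (Ep : E p) by (split; [lra|intros x Hx; replace x with p by lra; lra]).
  destruct (completeness E) as [m Hm]; [exists q; intros t [Ht _]; lra|eauto|].
  assert (Hpm : p <= m) by (apply Hm; auto).
  assert (Hmq : m <= q) by (apply Hm; intros t [Ht _]; lra).
  assert (Hbelow : forall x, p <= x < m -> D x <= D p + e).
  { intros x Hx. destruct (lub_gt E m x Hm ltac:(lra)) as [t [[_ Ht] Hxt]]. apply Ht. lra. }
  assert (Hatm : D m <= D p + e).
  { destruct (Req_dec m p) as [->|Hne]; [lra|].
    apply Rnot_lt_le. intros Hlt.
    destruct (Hc m ltac:(lra) (D m - D p - e) ltac:(lra)) as [d [Hd Hd2]].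
    set (x := Rmax p (m - d / 2)).
    assert (Hx : p <= x < m) by (unfold x, Rmax; destruct Rle_dec; lra).
    assert (Hxm : Rabs (x - m) < d) by (unfold x, Rmax; destruct Rle_dec; apply Rabs_def1; lra).
    specialize (Hd2 x ltac:(lra) Hxm). apply Rabs_def2 in Hd2.
    specialize (Hbelow x Hx). lra. }
  enough (m = q) by (subst; lra).
  apply Rle_antisym; auto. apply Rnot_lt_le. intros Hmq'.
  destruct (Hloc m ltac:(lra)) as [d [Hd Hd2]].
  set (s := Rmin (m + d / 2) q).
  assert (Hs : m < s <= q) by (unfold s, Rmin; destruct Rle_dec; lra).
  assert (Es : E s).
  { split; [lra|]. intros x Hx. destruct (Rlt_le_dec x m); [apply Hbelow; lra|].
    destruct (Req_dec x m) as [->|]; auto.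
    assert (D x <= D m); [|lra].
    apply Hd2; [|lra]. split; [lra|]. unfold s, Rmin in Hx. destruct Rle_dec in Hx; lra. }
  assert (s <= m) by (apply Hm; auto). lra.
Qed.

Lemma last_le_level (F : R -> R) (p q c : R) :
  p < q -> continuous_seg F p q -> F p <= c -> c < F q ->
  exists w, p <= w < q /\ F w <= c /\ forall x, w < x <= q -> c < F x.
Proof.
  intros Hpq Hc Hp Hq.
  set (E := fun t => p <= t <= q /\ F t <= c).
  destruct (completeness E) as [w Hw];
    [exists q; intros t [Ht _]; lra|exists p; split; [lra|auto]|].
  assert (Hpw : p <= w) by (apply Hw; split; [lra|auto]).
  assert (Hwq : w <= q) by (apply Hw; intros t [Ht _]; lra).
  assert (Hatw : F w <= c).
  { destruct (Req_dec w p) as [->|Hne]; auto.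
    apply Rnot_lt_le. intros Hlt.
    destruct (Hc w ltac:(lra) (F w - c) ltac:(lra)) as [d [Hd Hd2]].
    destruct (lub_gt E w (w - d) Hw ltac:(lra)) as [t [[Ht1 Ht2] Ht3]].
    assert (t <= w) by (apply Hw; split; auto).
    specialize (Hd2 t ltac:(lra) ltac:(apply Rabs_def1; lra)). apply Rabs_def2 in Hd2. lra. }
  assert (w <> q) by (intros ->; lra).
  exists w. split; [lra|split; auto]. intros x Hx. apply Rnot_le_lt. intros Hxc.
  assert (x <= w) by (apply Hw; split; [lra|auto]). lra.
Qed.

Lemma first_le_level (F : R -> R) (p q c : R) :
  p < q -> continuous_seg F p q -> F q <= c -> c < F p ->
  exists w, p < w <= q /\ F w <= c /\ forall x, p <= x < w -> c < F x.
Proof.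
  intros Hpq Hc Hq Hp.
  destruct (last_le_level (fun t => F (- t)) (- q) (- p) c) as [w [Hw [Hwc Hafter]]].
  - lra.
  - intros t Ht e He. destruct (Hc (- t) ltac:(lra) e He) as [d [Hd Hd2]].
    exists d. split; auto. intros x Hx Hxt. apply Hd2; [lra|].
    replace (- x - - t) with (- (x - t)) by ring. rewrite Rabs_Ropp. auto.
  - rewrite Ropp_involutive. auto.
  - rewrite Ropp_involutive. auto.
  - exists (- w). repeat split; try lra; auto. intros x Hx.
    specialize (Hafter (- x) ltac:(lra)). rewrite Ropp_involutive in Hafter. auto.
Qed.

Lemma seq_le_of_lt_succ (t : nat -> R) (J : nat) : (forall j, (j < J)%nat -> t j < t (S j)) ->
  forall i k, (i <= k)%nat -> (k <= J)%nat -> t i <= t k.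
Proof.
  intros Hinc i k Hik. induction Hik as [|k Hik IH]; intros HkJ; [lra|].
  specialize (IH ltac:(lia)). specialize (Hinc k ltac:(lia)). lra.
Qed.

Section IntegralOnSegment.

Variables (h : R -> R) (T : R).
Hypotheses (h_int : ex_RInt h 0 T) (h_ge0 : forall x, 0 <= h x).

Lemma ex_RInt_subseg p q : 0 <= p <= q -> q <= T -> ex_RInt h p q.
Proof.
  intros Hp Hq. apply (ex_RInt_Chasles_1 h p q T); [lra|].
  apply (ex_RInt_Chasles_2 h 0 p T); [lra|auto].
Qed.

Lemma RInt_subseg_chasles p q s : 0 <= p <= q -> q <= s <= T ->
  RInt h p q + RInt h q s = RInt h p s.
Proof. intros Hpq Hqs. apply (RInt_Chasles h p q s); apply ex_RInt_subseg; lra. Qed.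

Lemma RInt_subseg_le p q p' q' : 0 <= p <= p' -> p' <= q' <= q -> q <= T ->
  RInt h p' q' <= RInt h p q.
Proof.
  intros Hp Hpq Hq.
  rewrite <- (RInt_subseg_chasles p p' q), <- (RInt_subseg_chasles p' q' q) by lra.
  assert (0 <= RInt h p p') by (apply RInt_ge_0; [lra|apply ex_RInt_subseg; lra|auto]).
  assert (0 <= RInt h q' q) by (apply RInt_ge_0; [lra|apply ex_RInt_subseg; lra|auto]).
  lra.
Qed.

Lemma fsum_le_RInt (g : nat -> R) (K : R) (J : nat) (t : nat -> R) :
  0 <= K -> 0 <= t O -> t J <= T -> (forall j, (j < J)%nat -> t j < t (S j)) ->
  (forall j, (j < J)%nat -> g j <= K * RInt h (t j) (t (S j))) ->
  fsum g J <= K * RInt h 0 T.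
Proof.
  intros HK Ht0 HtJ Hinc Hg. pose proof (seq_le_of_lt_succ t J Hinc) as Hmono.
  assert (Hpartial : forall k, (k <= J)%nat -> fsum g k <= K * RInt h (t O) (t k)).
  { induction k as [|k IH]; intros HkJ; simpl.
    - rewrite RInt_point. change (zero : R) with 0. lra.
    - pose proof (Hmono O k ltac:(lia) ltac:(lia)).
      pose proof (Hmono (S k) J ltac:(lia) ltac:(lia)).
      pose proof (Hinc k ltac:(lia)).
      rewrite <- (RInt_subseg_chasles (t O) (t k) (t (S k))) by lra.
      specialize (IH ltac:(lia)). specialize (Hg k ltac:(lia)). lra. }
  eapply Rle_trans; [apply Hpartial; lia|].
  apply Rmult_le_compat_l; auto.
  apply RInt_subseg_le; [lra|split; [apply Hmono; lia|lra]|lra].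
Qed.

End IntegralOnSegment.

Definition clamp (T x : R) : R := Rmax 0 (Rmin T x).

Lemma clamp_id (T x : R) : 0 <= x <= T -> clamp T x = x.
Proof. intros H. unfold clamp, Rmax, Rmin. repeat destruct Rle_dec; lra. Qed.

Lemma clamp_in (T x : R) : 0 <= T -> 0 <= clamp T x <= T.
Proof. intros H. unfold clamp, Rmax, Rmin. repeat destruct Rle_dec; lra. Qed.

Lemma clamp_lipschitz (T x y : R) : 0 <= T -> Rabs (clamp T x - clamp T y) <= Rabs (x - y).
Proof.
  intros H. unfold clamp, Rmax, Rmin.
  repeat destruct Rle_dec; unfold Rabs; repeat destruct Rcase_abs; lra.
Qed.

Section ContinuousPaths.

Variables (X : NormedSpace) (T : R).

Lemma continuous_on_of_derivative (a a' : R -> X) :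
  has_derivative_on a a' T -> continuous_on a T.
Proof.
  intros hder t Ht e He. destruct (hder t Ht 1 Rlt_0_1) as [d [Hd H]].
  set (k := vnorm (a' t) + 1).
  assert (Hk : 0 < k) by (pose proof (vnorm_ge0 X (a' t)); unfold k; lra).
  exists (Rmin d (e / k)). split; [apply Rmin_pos; [lra|apply Rdiv_lt_0_compat; lra]|].
  intros s Hs Hst.
  destruct (Req_dec s t) as [->|Hne]; [rewrite vsubv, vnorm0; lra|].
  assert (Hsd : Rabs (s - t) < d) by (eapply Rlt_le_trans; [apply Hst|apply Rmin_l]).
  assert (Hse : Rabs (s - t) * k < e).
  { apply Rlt_le_trans with (e / k * k); [|right; field; lra].
    apply Rmult_lt_compat_r; auto. eapply Rlt_le_trans; [apply Hst|apply Rmin_r]. }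
  eapply Rle_lt_trans; [|exact Hse].
  apply vnorm_le_of_quotient; [lra|]. apply H; auto.
Qed.

Lemma continuous_seg_vnorm (f : R -> X) :
  continuous_on f T -> continuous_seg (fun x => vnorm (f x)) 0 T.
Proof.
  intros Hf t Ht e He. destruct (Hf t Ht e He) as [d [Hd H]].
  exists d. split; auto. intros x Hx Hxt.
  eapply Rle_lt_trans; [apply vnorm_sub_ge|]. auto.
Qed.

Lemma continuous_seg_vnorm_sub (f : R -> X) (y : X) :
  continuous_on f T -> continuous_seg (fun x => vnorm (vsub (f x) y)) 0 T.
Proof.
  intros Hf t Ht e He. destruct (Hf t Ht e He) as [d [Hd H]].
  exists d. split; auto. intros x Hx Hxt. specialize (H x Hx Hxt).
  pose proof (vnorm_sub_triangle X (f x) (f t) y). pose proof (vnorm_sub_triangle X (f t) (f x) y).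
  rewrite (vnorm_subC X (f t) (f x)) in *. apply Rabs_def1; lra.
Qed.

Lemma continuous_vnorm_clamp (f : R -> X) :
  0 <= T -> continuous_on f T -> forall x, continuous (fun y => vnorm (f (clamp T y))) x.
Proof.
  intros HT Hf x. apply continuity_pt_filterlim. intros e He.
  destruct (Hf (clamp T x) (clamp_in T x HT) e He) as [d [Hd H]].
  exists d. split; auto. intros y [_ Hy]. simpl in Hy. unfold R_dist in Hy |- *.
  eapply Rle_lt_trans; [apply vnorm_sub_ge|]. apply H; [apply clamp_in; auto|].
  eapply Rle_lt_trans; [apply clamp_lipschitz|]; auto.
Qed.

(* If |f| dips below c, one endpoint has norm >= 2c; take the last (or first) crossing
   of level c before it. *)
Lemma exists_subseg_away_from_zero (f : R -> X) (s0 s1 c : R) :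
  continuous_on f T -> 0 <= s0 < s1 -> s1 <= T -> 4 * c <= vnorm (vsub (f s1) (f s0)) ->
  exists u v, s0 <= u <= v /\ v <= s1 /\ c <= vnorm (vsub (f v) (f u)) /\
    forall x, u < x < v -> c <= vnorm (f x).
Proof.
  intros Hf Hs0 Hs1 HD.
  assert (HF : continuous_seg (fun x => vnorm (f x)) s0 s1)
    by (apply (continuous_seg_narrow _ 0 T); [lra|lra|apply continuous_seg_vnorm; auto]).
  pose proof (vnorm_ge0 X (vsub (f s1) (f s0))).
  destruct (classic (exists x, s0 < x < s1 /\ vnorm (f x) < c)) as [[x [Hx Hfx]]|Hfar].
  2: { exists s0, s1. repeat split; try lra.
       intros x Hx. apply Rnot_lt_le. intros Hlt. apply Hfar. eauto. }
  assert (Hc : 0 < c) by (pose proof (vnorm_ge0 X (f x)); lra).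
  pose proof (vnorm_sub_triangle X (f s1) vzero (f s0)) as Hsum.
  rewrite vsubr0, (vnorm_subC X vzero), vsubr0 in Hsum.
  destruct (Rle_dec (2 * c) (vnorm (f s1))) as [H1|H1].
  - assert (HF' : continuous_seg (fun y => vnorm (f y)) x s1)
      by (apply (continuous_seg_narrow _ s0 s1); auto; lra).
    destruct (last_le_level _ x s1 c ltac:(lra) HF' ltac:(lra) ltac:(lra))
      as [w [Hw [Hwc Hafter]]].
    exists w, s1. repeat split; try lra.
    + pose proof (vnorm_sub_ge X (f s1) (f w)) as Hge.
      pose proof (Rle_abs (vnorm (f s1) - vnorm (f w))). simpl in *. lra.
    + intros y Hy. left. apply Hafter. lra.
  - assert (HF' : continuous_seg (fun y => vnorm (f y)) s0 x)
      by (apply (continuous_seg_narrow _ s0 s1); auto; lra).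
    destruct (first_le_level _ s0 x c ltac:(lra) HF' ltac:(lra) ltac:(lra))
      as [w [Hw [Hwc Hbefore]]].
    exists s0, w. repeat split; try lra.
    + pose proof (vnorm_sub_ge X (f s0) (f w)) as Hge. rewrite vnorm_subC.
      pose proof (Rle_abs (vnorm (f s0) - vnorm (f w))). simpl in *. lra.
    + intros y Hy. left. apply Hbefore. lra.
Qed.

End ContinuousPaths.

Definition young_integrand {X : NormedSpace} (a a' : R -> X) (r mu x : R) : R :=
  young_comb r mu (rpow (vnorm (a x)) r) (rpow (vnorm (a' x)) r).

Lemma is_RInt_young_integrand (X : NormedSpace) (a a' : R -> X) (r mu T : R)
  (pa : Riemann_integrable (fun t => rpow (vnorm (a t)) r) 0 T)
  (pa' : Riemann_integrable (fun t => rpow (vnorm (a' t)) r) 0 T) :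
  is_RInt (young_integrand a a' r mu) 0 T (young_comb r mu (RiemannInt pa) (RiemannInt pa')).
Proof.
  apply (@is_RInt_plus R_NormedModule
           (fun x => scal ((1 - / r) * mu) (rpow (vnorm (a x)) r))
           (fun x => scal (/ r * rpow mu (1 - r)) (rpow (vnorm (a' x)) r))).
  - apply (@is_RInt_scal R_NormedModule _ 0 T _ (RiemannInt pa)), ex_RInt_Reals_aux_1.
  - apply (@is_RInt_scal R_NormedModule _ 0 T _ (RiemannInt pa')), ex_RInt_Reals_aux_1.
Qed.

Section DifferentiablePath.

Variables (X : NormedSpace) (a a' : R -> X) (T : R).
Hypotheses (hT : 0 < T) (hder : has_derivative_on a a' T) (hcont : continuous_on a' T).

(* |a'| extended continuously to all of R, so that its Coquelicot integrals exist. *)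
Let n x := vnorm (a' (clamp T x)).

Let n_continuous x : continuous n x.
Proof. apply continuous_vnorm_clamp; auto; lra. Qed.

Let ex_RInt_n p q : ex_RInt n p q.
Proof. apply (@ex_RInt_continuous R_CompleteNormedModule). intros; apply n_continuous. Qed.

Lemma vnorm_increment_le_RInt_local t e : 0 <= t <= T -> 0 < e ->
  exists d, 0 < d /\ forall s, t < s < t + d -> s <= T ->
    vnorm (vsub (a s) (a t)) <= RInt n t s + e * (s - t).
Proof.
  intros Ht He.
  destruct (hder t Ht (e / 2) ltac:(lra)) as [d1 [Hd1 H1]].
  destruct (hcont t Ht (e / 2) ltac:(lra)) as [d2 [Hd2 H2]].
  exists (Rmin d1 d2). split; [apply Rmin_pos; auto|]. intros s Hs HsT.
  assert (Hsd1 : s - t < d1) by (pose proof (Rmin_l d1 d2); lra).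
  assert (Hsd2 : s - t < d2) by (pose proof (Rmin_r d1 d2); lra).
  assert (Hquot : vnorm (vsub (a s) (a t)) <= (s - t) * (vnorm (a' t) + e / 2)).
  { rewrite <- (Rabs_right (s - t)) by lra.
    apply vnorm_le_of_quotient; [lra|]. apply H1; [lra|lra|rewrite Rabs_right; lra]. }
  assert (Hlow : (s - t) * (vnorm (a' t) - e / 2) <= RInt n t s).
  { replace ((s - t) * (vnorm (a' t) - e / 2)) with (RInt (fun _ => vnorm (a' t) - e / 2) t s)
      by (rewrite RInt_const; reflexivity).
    apply RInt_le; [lra|apply ex_RInt_const|apply ex_RInt_n|].
    intros x Hx. unfold n. rewrite clamp_id by lra.
    specialize (H2 x ltac:(lra) ltac:(rewrite Rabs_right; lra)).
    pose proof (vnorm_sub_ge X (a' x) (a' t)) as Hge. apply Rabs_le_between' in Hge. lra. }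
  lra.
Qed.

Lemma vnorm_sub_le_RInt u v : 0 <= u <= v -> v <= T -> vnorm (vsub (a v) (a u)) <= RInt n u v.
Proof.
  intros Hu HvT. apply Rle_plus_epsilon. intros eps Heps.
  set (e := eps / (v - u + 1)).
  assert (He : 0 < e) by (apply Rdiv_lt_0_compat; lra).
  assert (Hev : e * (v - u) <= eps).
  { apply Rle_trans with (e * (v - u + 1)); [apply Rmult_le_compat_l; lra|].
    unfold e. right. field. lra. }
  set (D := fun t => vnorm (vsub (a t) (a u)) - (RInt n u t + e * t)).
  assert (HD : D v <= D u).
  { apply le_of_right_nonincreasing; [lra| |].
    - apply continuous_seg_minus.
      + apply (continuous_seg_narrow _ 0 T); [lra|lra|].
        apply continuous_seg_vnorm_sub, (continuous_on_of_derivative X T a a'), hder.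
      + apply continuous_seg_of_continuous. intros x.
        apply (continuous_plus (fun t => RInt n u t) (fun t => e * t)).
        * apply (continuous_RInt_1 n u x), filter_forall. intros y.
          apply (@RInt_correct R_CompleteNormedModule), ex_RInt_n.
        * apply (@continuous_mult R_UniformSpace R_AbsRing (fun _ => e) (fun t => t));
            [apply continuous_const|apply continuous_id].
    - intros t Ht. destruct (vnorm_increment_le_RInt_local t e) as [d [Hd H]]; [lra|auto|].
      exists d. split; auto. intros s Hs Hsv. specialize (H s Hs ltac:(lra)).
      assert (Hch : RInt n u t + RInt n t s = RInt n u s)
        by (apply (RInt_Chasles n u t s); apply ex_RInt_n).
      pose proof (vnorm_sub_triangle X (a s) (a t) (a u)).
      unfold D. lra. }
  unfold D in HD. rewrite RInt_point, vsubv, vnorm0 in HD. change (zero : R) with 0 in HD. lra.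
Qed.

Variables (r mu : R).
Hypotheses (hr : 1 <= r) (hmu : 0 < mu) (h_int : ex_RInt (young_integrand a a' r mu) 0 T).

Let h_ge0 x : 0 <= young_integrand a a' r mu x.
Proof. apply young_comb_ge0; auto; apply rpow_ge0. Qed.

Lemma vnorm_sub_le_RInt_young u v c : 0 <= u <= v -> v <= T -> 0 <= c ->
  (forall x, u < x < v -> c <= vnorm (a x)) ->
  rpow c (r - 1) * vnorm (vsub (a v) (a u)) <= RInt (young_integrand a a' r mu) u v.
Proof.
  intros Huv HvT Hc Hfar.
  set (k := rpow c (r - 1)).
  apply Rle_trans with (RInt (fun x => k * n x) u v).
  - replace (RInt (fun x => k * n x) u v) with (k * RInt n u v)
      by (symmetry; exact (@RInt_scal R_CompleteNormedModule n u v k (ex_RInt_n u v))).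
    apply Rmult_le_compat_l; [apply rpow_ge0|]. apply vnorm_sub_le_RInt; auto.
  - apply RInt_le; [lra|exact (@ex_RInt_scal R_CompleteNormedModule n u v k (ex_RInt_n u v))|
      apply (ex_RInt_subseg _ T); auto|].
    intros x Hx. unfold k, n. rewrite clamp_id by lra.
    eapply Rle_trans; [apply (young r mu); auto; apply vnorm_ge0|].
    apply young_comb_le_l; auto. apply rpow_le; [split; [lra|apply Hfar; lra]|lra].
Qed.

Lemma rpow_vnorm_sub_le_RInt_young s0 s1 : 0 <= s0 < s1 -> s1 <= T ->
  rpow (vnorm (vsub (a s1) (a s0))) r <= rpow 4 r * RInt (young_integrand a a' r mu) s0 s1.
Proof.
  intros Hs0 Hs1. set (D := vnorm (vsub (a s1) (a s0))).
  assert (HI : 0 <= RInt (young_integrand a a' r mu) s0 s1)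
    by (apply RInt_ge_0; [lra|apply (ex_RInt_subseg _ T); auto; lra|auto]).
  pose proof (rpow_ge0 4 r).
  destruct (Req_dec D 0) as [HD|HD].
  { rewrite HD, rpow_0l by lra. apply Rmult_le_pos; auto. }
  set (c := D / 4).
  assert (Hc : 0 < c) by (pose proof (vnorm_ge0 X (vsub (a s1) (a s0))); unfold c, D in *; lra).
  destruct (exists_subseg_away_from_zero X T a s0 s1 c) as (u & v & Huv & Hv & Hcuv & Hfar);
    [apply (continuous_on_of_derivative X T a a'), hder|lra|auto|unfold c, D; lra|].
  replace (rpow D r) with (rpow 4 r * (rpow c (r - 1) * c)).
  - apply Rmult_le_compat_l; auto.
    apply Rle_trans with (rpow c (r - 1) * vnorm (vsub (a v) (a u))).
    + apply Rmult_le_compat_l; auto. apply rpow_ge0.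
    + eapply Rle_trans; [apply vnorm_sub_le_RInt_young; auto; lra|].
      apply (RInt_subseg_le _ T); auto; lra.
  - replace D with (4 * c) by (unfold c; field). rewrite rpowM by lra.
    rewrite <- (rpow_1r c) at 2 by lra. rewrite <- rpowD by lra.
    f_equal. f_equal. ring.
Qed.

Lemma fsum_rpow_increments_le_RInt (J : nat) (t : nat -> R) :
  0 <= t O -> t J <= T -> (forall j, (j < J)%nat -> t j < t (S j)) ->
  fsum (fun j => rpow (vnorm (vsub (a (t (S j))) (a (t j)))) r) J
    <= rpow 4 r * RInt (young_integrand a a' r mu) 0 T.
Proof.
  intros Ht0 HtJ Hinc.
  apply (fsum_le_RInt _ T h_int h_ge0 _ _ J t); auto; [apply rpow_ge0|].
  intros j Hj. pose proof (seq_le_of_lt_succ t J Hinc) as Hmono.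
  pose proof (Hmono O j ltac:(lia) ltac:(lia)). pose proof (Hmono (S j) J ltac:(lia) ltac:(lia)).
  apply rpow_vnorm_sub_le_RInt_young; auto; [|lra]. split; [lra|auto].
Qed.

End DifferentiablePath.

Lemma fsum_ge0 (f : nat -> R) (J : nat) : (forall j, 0 <= f j) -> 0 <= fsum f J.
Proof. intros H. induction J; simpl; [lra|]. specialize (H J). lra. Qed.

Lemma RiemannInt_ge0 (f : R -> R) (T : R) (pf : Riemann_integrable f 0 T) :
  0 <= T -> (forall x, 0 <= f x) -> 0 <= RiemannInt pf.
Proof.
  intros HT Hf. rewrite <- RInt_Reals.
  apply RInt_ge_0; auto. apply ex_RInt_Reals_1. exact pf.
Qed.

Theorem lemmaB1 (X : NormedSpace) (r T : R) (a a' : R -> X)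
  (hr : 1 <= r) (hT : 0 < T)
  (hder : has_derivative_on a a' T) (hcont : continuous_on a' T)
  (pa : Riemann_integrable (fun t => rpow (vnorm (a t)) r) 0 T)
  (pa' : Riemann_integrable (fun t => rpow (vnorm (a' t)) r) 0 T) :
  Vhat_le a r T
    (8 * rpow (rpow (RiemannInt pa) (/ r)) (1 - / r)
       * rpow (rpow (RiemannInt pa') (/ r)) (/ r)).
Proof.
  intros J t Ht0 HtJ Hinc. unfold rvar_sum.
  set (P := rpow (rpow (RiemannInt pa) (/ r)) (1 - / r) * rpow (rpow (RiemannInt pa') (/ r)) (/ r)).
  assert (HP : 0 <= P) by (apply Rmult_le_pos; apply rpow_ge0).
  apply Rle_trans with (4 * P); [|rewrite Rmult_assoc; fold P; lra].
  unfold P. rewrite <- Rmult_assoc. apply (rpow_inv_le_of_forall_young_comb r 4).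
  - lra.
  - lra.
  - apply RiemannInt_ge0; [lra|intros; apply rpow_ge0].
  - apply RiemannInt_ge0; [lra|intros; apply rpow_ge0].
  - apply fsum_ge0. intros; apply rpow_ge0.
  - intros mu Hmu. pose proof (is_RInt_young_integrand X a a' r mu T pa pa') as HI.
    rewrite <- (is_RInt_unique _ _ _ _ HI).
    apply (fsum_rpow_increments_le_RInt X a a' T); auto. eexists; exact HI.
Qed.
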